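(* Let $\Phi=(\alpha_1,\dots,\alpha_l)$ be a list of quantifier-free first-order formulas, $\Omega$ a nonempty finite set of possible worlds over a finite domain $\Delta$, $\mathbf{P}_R=\mathrm{RMP}(\Phi,\Omega)$, and $A^{=}\mathbf{x}=\mathbf{c}$ a maximal linearly independent system of linear equations satisfied by all vertices of $\mathbf{P}_R$. Let $\eta>0$ and let $\theta$ be a point in the $\eta$-interior of $\mathbf{P}_R$. Then there is a maximizer $\lambda^*$ of the dual function $L_\theta$ over $\mathbb{R}^l$ with $A^{=}\lambda^*=0$, and every maximizer $\lambda^*$ of $L_\theta$ satisfying $A^{=}\lambda^*=0$ satisfies $\|\lambda^*\|\le\log|\Omega|/\eta$ (Euclidean norm).
   Context: For a quantifier-free formula $\alpha$ with exactly $k$ free variables, $N(\alpha,\omega)$ is the number of injective substitutions of its variables by constants of $\Delta$ making $\alpha$ true in the possible world $\omega$ (a set of ground atoms), and $Q_\omega(\alpha)=\binom{|\Delta|}{k}^{-1}(k!)^{-1}N(\alpha,\omega)$; $Q_\omega(\Phi)=(Q_\omega(\alpha_1),\dots,Q_\omega(\alpha_l))$. $\mathrm{RMP}(\Phi,\Omega)$ is the convex hull of $\{Q_\omega(\Phi):\omega\in\Omega\}$. For $\theta\in\mathbb{R}^l$ the dual function is $L_\theta(\lambda)=\langle\lambda,\theta\rangle-\log\sum_{\omega\in\Omega}\exp(\langle\lambda,Q_\omega(\Phi)\rangle)$. A point $\theta$ is in the $\eta$-interior of $\mathbf{P}_R$ if $\{\theta':A^{=}\theta'=\mathbf{c},\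 \|\theta'-\theta\|\le\eta\}\subseteq\mathbf{P}_R$. *)

From Stdlib Require Import Reals Lra Lia List Arith Bool.
Import ListNotations.
Open Scope R_scope.

(* Variables and constants are named by nat; predicate symbols by nat.
   The arity of an atom is the length of its argument list. *)
Inductive term : Type :=
| TVar : nat -> term
| TConst : nat -> term.

Inductive formula : Type :=
| FAtom : nat -> list term -> formula
| FEq : term -> term -> formula
| FTop : formula
| FNeg : formula -> formula
| FAnd : formula -> formula -> formula
| FOr : formula -> formula -> formula.

(* Ground atoms: predicate symbol applied to a list of constants. *)
Definition gatom : Type := (nat * list nat)%type.

(* A possible world: a set of ground atoms (as a boolean characteristic
   function; with functional extensionality equality of worlds is equality
   of sets of ground atoms). *)
Definition world : Type := gatom -> bool.

Definition world_over (Delta : list nat) (w : world) : Prop :=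
  forall (p : nat) (args : list nat),
    w (p, args) = true -> forall a, In a args -> In a Delta.

Definition term_val (env : nat -> nat) (t : term) : nat :=
  match t with TVar x => env x | TConst c => c end.

Fixpoint eval (env : nat -> nat) (w : world) (f : formula) : bool :=
  match f with
  | FAtom p ts => w (p, map (term_val env) ts)
  | FEq t1 t2 => Nat.eqb (term_val env t1) (term_val env t2)
  | FTop => true
  | FNeg g => negb (eval env w g)
  | FAnd g h => eval env w g && eval env w h
  | FOr g h => eval env w g || eval env w h
  end.

Definition term_vars (t : term) : list nat :=
  match t with TVar x => [x] | TConst _ => [] end.

Fixpoint vars (f : formula) : list nat :=
  match f with
  | FAtom _ ts => flat_map term_vars ts
  | FEq t1 t2 => term_vars t1 ++ term_vars t2
  | FTop => []
  | FNeg g => vars g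
  | FAnd g h => vars g ++ vars h
  | FOr g h => vars g ++ vars h
  end.

(* The (duplicate-free) list of free variables of a formula; k = its length. *)
Definition free_vars (f : formula) : list nat := nodup Nat.eq_dec (vars f).

Fixpoint tuples (D : list nat) (k : nat) : list (list nat) :=
  match k with
  | O => [[]]
  | S k' => flat_map (fun t => map (fun d => d :: t) D) (tuples D k')
  end.

Fixpoint nodupb (s : list nat) : bool :=
  match s with
  | [] => true
  | x :: r => negb (existsb (Nat.eqb x) r) && nodupb r
  end.

(* Injective k-tuples from D: with D duplicate-free, these are in bijection
   with the injective substitutions of k given variables by constants of D. *)
Definition inj_tuples (D : list nat) (k : nat) : list (list nat) :=
  filter nodupb (tuples D k).

Fixpoint subst_of (xs t : list nat) (x : nat) : nat :=
  match xs, t with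
  | y :: xs', c :: t' => if Nat.eqb x y then c else subst_of xs' t' x
  | _, _ => 0%nat
  end.

(* N(alpha, omega): number of injective substitutions of the free variables
   of alpha by constants of Delta making alpha true in omega. *)
Definition Ncount (Delta : list nat) (f : formula) (w : world) : nat :=
  let xs := free_vars f in
  length (filter (fun t => eval (subst_of xs t) w f)
                 (inj_tuples Delta (length xs))).

Definition Qw (Delta : list nat) (f : formula) (w : world) : R :=
  let k := length (free_vars f) in
  / C (length Delta) k * / INR (fact k) * INR (Ncount Delta f w).

(** * Vectors in R^l are functions nat -> R, only indices < l matter. *)
Definition vec := nat -> R.

Definition sumR (n : nat) (g : nat -> R) : R :=
  fold_right Rplus 0 (map g (seq 0 n)).

Definition inner (l : nat) (x y : vec) : R := sumR l (fun i => x i * y i).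

Definition norm2 (l : nat) (x : vec) : R := sqrt (inner l x x).

Definition veq (l : nat) (x y : vec) : Prop := forall i, (i < l)%nat -> x i = y i.

Definition QPhi (Delta : list nat) (Phi : list formula) (w : world) : vec :=
  fun i => Qw Delta (nth i Phi FTop) w.

Definition in_conv_hull (l : nat) (pts : list vec) (x : vec) : Prop :=
  exists wt : nat -> R,
    (forall k, (k < length pts)%nat -> 0 <= wt k) /\
    sumR (length pts) wt = 1 /\
    veq l x (fun i => sumR (length pts) (fun k => wt k * nth k pts (fun _ => 0) i)).

Definition RMP (Delta : list nat) (Phi : list formula) (Omega : list world)
  : vec -> Prop :=
  in_conv_hull (length Phi) (map (QPhi Delta Phi) Omega).

Definition is_vertex (l : nat) (P : vec -> Prop) (v : vec) : Prop :=
  P v /\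
  forall x y (t : R), P x -> P y -> 0 < t < 1 ->
    veq l v (fun i => t * x i + (1 - t) * y i) -> veq l x v /\ veq l y v.

Definition mat_vec (l : nat) (A : nat -> vec) (x : vec) : vec :=
  fun i => inner l (A i) x.

Definition satisfies (m l : nat) (A : nat -> vec) (c : vec) (x : vec) : Prop :=
  forall i, (i < m)%nat -> mat_vec l A x i = c i.

Definition lin_indep (m l : nat) (A : nat -> vec) : Prop :=
  forall mu : nat -> R,
    (forall j, (j < l)%nat -> sumR m (fun i => mu i * A i j) = 0) ->
    forall i, (i < m)%nat -> mu i = 0.

Definition max_indep_system (m l : nat) (A : nat -> vec) (c : vec)
  (P : vec -> Prop) : Prop :=
  (forall v, is_vertex l P v -> satisfies m l A c v) /\
  lin_indep m l A /\
  forall (a : vec) (b : R),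
    (forall v, is_vertex l P v -> inner l a v = b) ->
    ~ lin_indep (S m) l (fun i => if Nat.ltb i m then A i else a).

Definition eta_interior (m l : nat) (A : nat -> vec) (c : vec)
  (P : vec -> Prop) (eta : R) (theta : vec) : Prop :=
  forall theta', satisfies m l A c theta' ->
    norm2 l (fun i => theta' i - theta i) <= eta -> P theta'.

Definition Ldual (Delta : list nat) (Phi : list formula) (Omega : list world)
  (theta lam : vec) : R :=
  inner (length Phi) lam theta
  - ln (fold_right Rplus 0
          (map (fun w => exp (inner (length Phi) lam (QPhi Delta Phi w))) Omega)).

Definition is_maximizer (Delta : list nat) (Phi : list formula)
  (Omega : list world) (theta lam : vec) : Prop :=
  forall mu : vec, Ldual Delta Phi Omega theta mu <= Ldual Delta Phi Omega theta lam.

From Stdlib Require Import Reals List Lra Lia.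
Open Scope R_scope.

(* The statement only depends on the finite point set
   [pts = map Q_Phi Omega] in R^l, so we work with an arbitrary nonempty list
   of points, its convex hull [P], and the dual function
     L(lam) = <lam, theta> - ln (sum_{p in pts} exp <lam, p>).
   (1) Every linear equation valid on the vertices of [P] is valid on all of
       [P]: a maximiser among [pts] of the strictly convex potential
       |z|^2 + K <a, z> is a vertex, and for K large this forces <a, p> <= b.
   (2) <lam, x> <= ln (sum exp <lam, p>) on [P], so using the point
       theta + eta lam / |lam| of the eta-interior gives the coercivity bound
       L(lam) <= - eta |lam| whenever A^= lam = 0, while L(0) = - ln |pts|.
   (3) Since A^= x = c on [P], L is invariant under adding combinations of the
       rows of A^=; an orthogonal projection onto the kernel of A^= therefore
       shows that sup L is the sup over the kernel.
   (4) L is Lipschitz, so it attains its maximum on the compact set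
       {A^= lam = 0, |lam_i| <= ln|pts|/eta} (extreme value theorem from
       MathComp-Analysis); by (2) this is a global maximiser, and (2) again
       bounds the norm of every maximiser lying in the kernel. *)

Lemma fold_plus_acc (L : list R) a : fold_right Rplus a L = fold_right Rplus 0 L + a.
Proof. induction L; simpl; [lra|rewrite IHL; lra]. Qed.

Lemma sumR_S n g : sumR (S n) g = sumR n g + g n.
Proof.
  unfold sumR. rewrite seq_S, map_app, fold_right_app. simpl.
  rewrite fold_plus_acc. lra.
Qed.

Lemma sumR_ext n f g : (forall i, (i < n)%nat -> f i = g i) -> sumR n f = sumR n g.
Proof.
  induction n; intros H; [reflexivity|].
  rewrite !sumR_S, IHn; [rewrite H; [reflexivity|lia]|intros; apply H; lia].
Qed.

Lemma sumR_plus n f g : sumR n (fun i => f i + g i) = sumR n f + sumR n g.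
Proof. induction n; [unfold sumR; simpl; lra|rewrite !sumR_S, IHn; lra]. Qed.

Lemma sumR_minus n f g : sumR n (fun i => f i - g i) = sumR n f - sumR n g.
Proof. induction n; [unfold sumR; simpl; lra|rewrite !sumR_S, IHn; lra]. Qed.

Lemma sumR_scal n c f : sumR n (fun i => c * f i) = c * sumR n f.
Proof. induction n; [unfold sumR; simpl; lra|rewrite !sumR_S, IHn; lra]. Qed.

Lemma sumR_scal_r n c f : sumR n (fun i => f i * c) = sumR n f * c.
Proof. induction n; [unfold sumR; simpl; lra|rewrite !sumR_S, IHn; lra]. Qed.

Lemma sumR_const0 n : sumR n (fun _ => 0) = 0.
Proof. induction n; [reflexivity|rewrite sumR_S, IHn; lra]. Qed.

Lemma sumR_le n f g : (forall i, (i < n)%nat -> f i <= g i) -> sumR n f <= sumR n g.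
Proof.
  induction n; intros H; [unfold sumR; simpl; lra|].
  rewrite !sumR_S. assert (f n <= g n) by (apply H; lia).
  assert (sumR n f <= sumR n g) by (apply IHn; intros; apply H; lia). lra.
Qed.

Lemma sumR_nonneg n f : (forall i, (i < n)%nat -> 0 <= f i) -> 0 <= sumR n f.
Proof. intros H. rewrite <- (sumR_const0 n). apply sumR_le. exact H. Qed.

Lemma sumR_swap n m F :
  sumR n (fun i => sumR m (fun j => F i j)) = sumR m (fun j => sumR n (fun i => F i j)).
Proof.
  induction n.
  - symmetry. apply (sumR_const0 m).
  - rewrite sumR_S, IHn, <- sumR_plus. apply sumR_ext. intros. rewrite sumR_S. reflexivity.
Qed.

Lemma sumR_abs n f : Rabs (sumR n f) <= sumR n (fun i => Rabs (f i)).
Proof.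
  induction n; [unfold sumR; simpl; rewrite Rabs_R0; lra|].
  rewrite !sumR_S. eapply Rle_trans; [apply Rabs_triang|]. lra.
Qed.

Lemma sumR_delta n k f : (k < n)%nat ->
  sumR n (fun i => (if Nat.eqb i k then 1 else 0) * f i) = f k.
Proof.
  induction n; intros Hk; [lia|].
  rewrite sumR_S. destruct (Nat.eq_dec k n) as [->|Hne].
  - rewrite Nat.eqb_refl. rewrite (sumR_ext n _ (fun _ => 0)).
    + rewrite sumR_const0; lra.
    + intros i Hi. destruct (Nat.eqb_spec i n); [lia|lra].
  - rewrite IHn by lia. destruct (Nat.eqb_spec n k); [lia|lra].
Qed.

Lemma sumR_term_le n f k :
  (forall i, (i < n)%nat -> 0 <= f i) -> (k < n)%nat -> f k <= sumR n f.
Proof.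
  induction n; intros H Hk; [lia|].
  rewrite sumR_S. destruct (Nat.eq_dec k n) as [->|Hne].
  - assert (0 <= sumR n f) by (apply sumR_nonneg; intros; apply H; lia). lra.
  - assert (f k <= sumR n f) by (apply IHn; [intros; apply H; lia|lia]).
    assert (0 <= f n) by (apply H; lia). lra.
Qed.

Lemma jensen_sq n (w q : nat -> R) :
  (forall k, (k < n)%nat -> 0 <= w k) -> sumR n w = 1 ->
  sumR n (fun k => w k * q k) * sumR n (fun k => w k * q k)
  <= sumR n (fun k => w k * (q k * q k)).
Proof.
  intros Hnn Hs. set (mean := sumR n (fun k => w k * q k)).
  assert (Hvar : 0 <= sumR n (fun k => w k * ((q k - mean) * (q k - mean)))).
  { apply sumR_nonneg. intros k Hk. apply Rmult_le_pos; [exact (Hnn k Hk)|apply Rle_0_sqr]. }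
  assert (Hexpand : sumR n (fun k => w k * ((q k - mean) * (q k - mean))) =
              sumR n (fun k => w k * (q k * q k)) - 2 * mean * mean + mean * mean * sumR n w).
  { transitivity (sumR n (fun k => (w k * (q k * q k) - (2 * mean) * (w k * q k))
                                   + (mean * mean) * w k)).
    - apply sumR_ext. intros; ring.
    - rewrite sumR_plus, sumR_minus, !sumR_scal. fold mean. ring. }
  rewrite Hs in Hexpand. lra.
Qed.

Lemma inner_ext l x x' y y' : veq l x x' -> veq l y y' -> inner l x y = inner l x' y'.
Proof.
  intros H1 H2. unfold inner. apply sumR_ext. intros i Hi.
  rewrite H1, H2 by exact Hi. reflexivity.
Qed.

Lemma inner_comm l x y : inner l x y = inner l y x.
Proof. unfold inner. apply sumR_ext. intros; ring. Qed.

Lemma inner_plus_l l x y z : inner l (fun i => x i + y i) z = inner l x z + inner l y z.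
Proof. unfold inner. rewrite <- sumR_plus. apply sumR_ext; intros; cbv beta; ring. Qed.

Lemma inner_minus_l l x y z : inner l (fun i => x i - y i) z = inner l x z - inner l y z.
Proof. unfold inner. rewrite <- sumR_minus. apply sumR_ext; intros; cbv beta; ring. Qed.

Lemma inner_plus_r l x y z : inner l z (fun i => x i + y i) = inner l z x + inner l z y.
Proof. rewrite inner_comm, inner_plus_l, !(inner_comm l z). reflexivity. Qed.

Lemma inner_minus_r l x y z : inner l z (fun i => x i - y i) = inner l z x - inner l z y.
Proof. rewrite inner_comm, inner_minus_l, !(inner_comm l z). reflexivity. Qed.

Lemma inner_scal_l l c x y : inner l (fun i => c * x i) y = c * inner l x y.
Proof. unfold inner. rewrite <- sumR_scal. apply sumR_ext; intros; cbv beta; ring. Qed.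

Lemma inner_scal_r l c x y : inner l x (fun i => c * y i) = c * inner l x y.
Proof. unfold inner. rewrite <- sumR_scal. apply sumR_ext; intros; cbv beta; ring. Qed.

Lemma inner_zero_l l y : inner l (fun _ => 0) y = 0.
Proof.
  unfold inner. transitivity (sumR l (fun _ => 0)); [apply sumR_ext; intros; ring|].
  apply sumR_const0.
Qed.

Lemma inner_zero_r l y : inner l y (fun _ => 0) = 0.
Proof. rewrite inner_comm. apply inner_zero_l. Qed.

Lemma inner_self_nonneg l x : 0 <= inner l x x.
Proof. unfold inner. apply sumR_nonneg. intros. nra. Qed.

Lemma inner_self_zero l x : inner l x x = 0 -> veq l x (fun _ => 0).
Proof.
  intros H i Hi.
  assert (x i * x i <= inner l x x)
    by (apply (sumR_term_le l (fun i => x i * x i)); [intros; nra|exact Hi]).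
  nra.
Qed.

Lemma inner_lipschitz l a x y d : (forall i, (i < l)%nat -> Rabs (y i - x i) <= d) ->
  Rabs (inner l a y - inner l a x) <= sumR l (fun i => Rabs (a i)) * d.
Proof.
  intros H. rewrite <- inner_minus_r. unfold inner.
  eapply Rle_trans; [apply sumR_abs|]. rewrite <- sumR_scal_r. apply sumR_le.
  intros i Hi. rewrite Rabs_mult.
  apply Rmult_le_compat_l; [apply Rabs_pos|apply H; exact Hi].
Qed.

Lemma norm2_sq l x : norm2 l x * norm2 l x = inner l x x.
Proof. unfold norm2. apply sqrt_sqrt. apply inner_self_nonneg. Qed.

Lemma norm2_scal l s x : norm2 l (fun i => s * x i) = Rabs s * norm2 l x.
Proof.
  unfold norm2. rewrite inner_scal_l, inner_scal_r, <- Rmult_assoc.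
  rewrite sqrt_mult_alt by nra. rewrite <- sqrt_Rsqr_abs. reflexivity.
Qed.

Lemma coord_le_norm2 l x i : (i < l)%nat -> Rabs (x i) <= norm2 l x.
Proof.
  intros Hi. unfold norm2. rewrite <- sqrt_Rsqr_abs. apply sqrt_le_1_alt.
  unfold Rsqr. apply (sumR_term_le l (fun i => x i * x i)); [intros; nra|exact Hi].
Qed.

Lemma argmax_idx (N : nat) (h : nat -> R) : (0 < N)%nat ->
  exists k0, (k0 < N)%nat /\ forall k, (k < N)%nat -> h k <= h k0.
Proof.
  induction N as [|N IH]; intros HN; [lia|].
  destruct (Nat.eq_dec N 0) as [->|HN0].
  - exists 0%nat. split; [lia|]. intros k Hk. replace k with 0%nat by lia. lra.
  - destruct IH as [k1 [Hk1 H1]]; [lia|].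
    destruct (Rle_dec (h N) (h k1)).
    + exists k1. split; [lia|]. intros k Hk.
      destruct (Nat.eq_dec k N); [subst; lra|apply H1; lia].
    + exists N. split; [lia|]. intros k Hk.
      destruct (Nat.eq_dec k N); [subst; lra|].
      assert (h k <= h k1) by (apply H1; lia). lra.
Qed.

Definition vzero : vec := fun _ => 0.

Section Hull.
Variable l : nat.
Variable pts : list vec.
Let N := length pts.
Let p k := nth k pts vzero.

Lemma hull_inner_eq a x wt :
  veq l x (fun i => sumR N (fun k => wt k * p k i)) ->
  inner l a x = sumR N (fun k => wt k * inner l a (p k)).
Proof.
  intros Hx. rewrite (inner_ext l a a x _ (fun i _ => eq_refl) Hx).
  unfold inner.
  transitivity (sumR l (fun i => sumR N (fun k => wt k * (a i * p k i)))).
  - apply sumR_ext. intros i _. rewrite <- sumR_scal. apply sumR_ext. intros; ring.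
  - rewrite sumR_swap. apply sumR_ext. intros k _. rewrite <- sumR_scal.
    apply sumR_ext. intros; ring.
Qed.

Lemma convex_comb_le (wt f : nat -> R) M :
  (forall k, (k < N)%nat -> 0 <= wt k) -> sumR N wt = 1 ->
  (forall k, (k < N)%nat -> f k <= M) -> sumR N (fun k => wt k * f k) <= M.
Proof.
  intros Hnn Hs Hf. apply Rle_trans with (sumR N (fun k => wt k * M)).
  - apply sumR_le. intros k Hk. apply Rmult_le_compat_l; [apply Hnn|apply Hf]; exact Hk.
  - rewrite sumR_scal_r, Hs. lra.
Qed.

Lemma hull_inner_le a M x : in_conv_hull l pts x ->
  (forall k, (k < N)%nat -> inner l a (p k) <= M) -> inner l a x <= M.
Proof.
  intros [wt [Hnn [Hs Hx]]] H. rewrite (hull_inner_eq a x wt Hx).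
  apply convex_comb_le; assumption.
Qed.

Lemma hull_inner_const a b x : in_conv_hull l pts x ->
  (forall k, (k < N)%nat -> inner l a (p k) = b) -> inner l a x = b.
Proof.
  intros Hx H. apply Rle_antisym.
  - apply (hull_inner_le a b x Hx). intros k Hk. rewrite H by exact Hk. lra.
  - assert (Hopp : inner l (fun i => -1 * a i) x <= -1 * b).
    { apply (hull_inner_le _ _ x Hx). intros k Hk. rewrite inner_scal_l, H by exact Hk. lra. }
    rewrite inner_scal_l in Hopp. lra.
Qed.

Lemma pt_in_hull k : (k < N)%nat -> in_conv_hull l pts (p k).
Proof.
  intros Hk. exists (fun i => if Nat.eqb i k then 1 else 0). split; [|split].
  - intros j _. destruct (Nat.eqb j k); lra.
  - transitivity (sumR N (fun i => (if Nat.eqb i k then 1 else 0) * 1)).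
    + apply sumR_ext; intros; ring.
    + apply (sumR_delta N k (fun _ => 1)); exact Hk.
  - intros i _. symmetry. apply (sumR_delta N k (fun k => p k i)). exact Hk.
Qed.

Definition potential (u z : vec) : R := inner l z z + inner l u z.

(* On the hull the potential is bounded by its maximum over [pts]
   (Jensen coordinatewise for the quadratic part). *)
Lemma potential_hull u x M : in_conv_hull l pts x ->
  (forall k, (k < N)%nat -> potential u (p k) <= M) -> potential u x <= M.
Proof.
  intros [wt [Hnn [Hs Hx]]] H.
  assert (Hquad : inner l x x <= sumR N (fun k => wt k * inner l (p k) (p k))).
  { unfold inner at 2.
    transitivity (sumR l (fun i => sumR N (fun k => wt k * (p k i * p k i)))).
    - unfold inner. apply sumR_le. intros i Hi. rewrite Hx by exact Hi.
      apply (jensen_sq N wt (fun k => p k i) Hnn Hs).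
    - right. rewrite sumR_swap. apply sumR_ext. intros k _. rewrite <- sumR_scal. reflexivity. }
  unfold potential. rewrite (hull_inner_eq u x wt Hx).
  apply Rle_trans with (sumR N (fun k => wt k * potential u (p k))).
  - rewrite (sumR_ext N (fun k => wt k * potential u (p k))
                (fun k => wt k * inner l (p k) (p k) + wt k * inner l u (p k)))
      by (intros k _; unfold potential; ring).
    rewrite sumR_plus. lra.
  - apply convex_comb_le; assumption.
Qed.

Lemma potential_segment u x y v t : veq l v (fun i => t * x i + (1 - t) * y i) ->
  potential u v = t * potential u x + (1 - t) * potential u y
                  - t * (1 - t) * inner l (fun i => x i - y i) (fun i => x i - y i).
Proof.
  intros Hv. unfold potential, inner.
  rewrite <- !sumR_plus, <- !sumR_scal, <- !sumR_plus, <- sumR_minus.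
  apply sumR_ext. intros i Hi. rewrite Hv by exact Hi. ring.
Qed.

Lemma argmax_potential_vertex u k0 : (k0 < N)%nat ->
  (forall k, (k < N)%nat -> potential u (p k) <= potential u (p k0)) ->
  is_vertex l (in_conv_hull l pts) (p k0).
Proof.
  intros Hk0 Hmax. split; [apply pt_in_hull; exact Hk0|].
  intros x y t Hx Hy Ht Hv.
  assert (Px := potential_hull u x _ Hx Hmax).
  assert (Py := potential_hull u y _ Hy Hmax).
  assert (Hseg := potential_segment u x y _ t Hv).
  assert (Hsq := inner_self_nonneg l (fun i => x i - y i)).
  assert (Hdiff : inner l (fun i => x i - y i) (fun i => x i - y i) = 0).
  { assert (0 < t * (1 - t)) by nra. nra. }
  assert (Exy := inner_self_zero l _ Hdiff).
  split; intros i Hi; rewrite Hv by exact Hi; specialize (Exy i Hi); simpl in Exy.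
  - replace (y i) with (x i) by lra. ring.
  - replace (x i) with (y i) by lra. ring.
Qed.

Lemma vertex_bound_to_points a b : (0 < N)%nat ->
  (forall v, is_vertex l (in_conv_hull l pts) v -> inner l a v <= b) ->
  forall k, (k < N)%nat -> inner l a (p k) <= b.
Proof.
  intros HN Hv k Hk. apply Rnot_lt_le. intros Hgt.
  destruct (argmax_idx N (fun j => inner l (p j) (p j)) HN) as [j [Hj HS]].
  set (S := inner l (p j) (p j)) in *.
  set (d := inner l a (p k) - b).
  assert (Hd : 0 < d) by (unfold d; lra).
  assert (HS0 : 0 <= S) by apply inner_self_nonneg.
  (* with weight K = (S+1)/d the linear term dominates the quadratic one *)
  set (K := (S + 1) / d).
  assert (HKd : K * d = S + 1) by (unfold K; field; lra).
  assert (HK : 0 < K) by (unfold K; apply Rdiv_lt_0_compat; lra).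
  set (u := fun i => 2 * K * a i).
  assert (Hpot : forall z, potential u z = inner l z z + 2 * K * inner l a z).
  { intros z. unfold potential, u. rewrite inner_scal_l. reflexivity. }
  destruct (argmax_idx N (fun j => potential u (p j)) HN) as [k0 [Hk0 Hmax]].
  assert (Hb := Hv _ (argmax_potential_vertex u k0 Hk0 Hmax)).
  assert (H1 := Hmax k Hk). rewrite !Hpot in H1. cbv beta in H1.
  assert (H2 := HS k0 Hk0). assert (H3 := inner_self_nonneg l (p k)).
  fold S in H2. unfold d in HKd. nra.
Qed.

Lemma vertex_equation_to_points a b : (0 < N)%nat ->
  (forall v, is_vertex l (in_conv_hull l pts) v -> inner l a v = b) ->
  forall k, (k < N)%nat -> inner l a (p k) = b.
Proof.
  intros HN Hv k Hk. apply Rle_antisym.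
  - apply (vertex_bound_to_points a b HN); [|exact Hk].
    intros v HV. rewrite Hv by exact HV. lra.
  - assert (Hopp : inner l (fun i => -1 * a i) (p k) <= -1 * b).
    { apply (vertex_bound_to_points _ _ HN); [|exact Hk].
      intros v HV. rewrite inner_scal_l, Hv by exact HV. lra. }
    rewrite inner_scal_l in Hopp. lra.
Qed.

End Hull.

Lemma hull_satisfies l m (pts : list vec) A c :
  pts <> nil ->
  (forall v, is_vertex l (in_conv_hull l pts) v -> satisfies m l A c v) ->
  forall x, in_conv_hull l pts x -> satisfies m l A c x.
Proof.
  intros Hne Hvert x Hx j Hj. unfold mat_vec.
  apply (hull_inner_const l pts (A j) (c j) x Hx). intros k Hk.
  apply (vertex_equation_to_points l pts (A j) (c j)); [|intros v Hv; apply (Hvert v Hv j Hj)|exact Hk].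
  destruct pts; [congruence|simpl; lia].
Qed.

Definition comb (m : nat) (A : nat -> vec) (nu : vec) : vec :=
  fun k => sumR m (fun j => nu j * A j k).

Lemma inner_comb l m A nu x :
  inner l x (comb m A nu) = sumR m (fun j => nu j * inner l x (A j)).
Proof.
  unfold inner, comb.
  transitivity (sumR l (fun i => sumR m (fun j => nu j * (x i * A j i)))).
  - apply sumR_ext. intros i _. rewrite <- sumR_scal. apply sumR_ext. intros; ring.
  - rewrite sumR_swap. apply sumR_ext. intros j _. rewrite <- sumR_scal. reflexivity.
Qed.

Lemma lin_indep_S m l A : lin_indep (S m) l A -> lin_indep m l A.
Proof.
  intros H mu Hmu i Hi.
  set (mu' := fun j => if Nat.ltb j m then mu j else 0).
  assert (Hm : forall j, (j < l)%nat -> sumR (S m) (fun i => mu' i * A i j) = 0).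
  { intros j Hj. rewrite sumR_S. unfold mu' at 2. rewrite Nat.ltb_irrefl, Rmult_0_l, Rplus_0_r.
    rewrite <- (Hmu j Hj). apply sumR_ext. intros k Hk.
    unfold mu'. apply Nat.ltb_lt in Hk. rewrite Hk. reflexivity. }
  specialize (H mu' Hm i ltac:(lia)). unfold mu' in H.
  apply Nat.ltb_lt in Hi. rewrite Hi in H. exact H.
Qed.

Lemma lin_indep_last m l A nu :
  lin_indep (S m) l A -> ~ veq l (A m) (comb m A nu).
Proof.
  intros HA Heq.
  set (mu := fun j => if Nat.ltb j m then - nu j else 1).
  assert (Hm : forall j, (j < l)%nat -> sumR (S m) (fun i => mu i * A i j) = 0).
  { intros j Hj. rewrite sumR_S. unfold mu at 2. rewrite Nat.ltb_irrefl, (Heq j Hj).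
    unfold comb. rewrite <- sumR_scal, <- sumR_plus. rewrite <- (sumR_const0 m).
    apply sumR_ext. intros k Hk. unfold mu. apply Nat.ltb_lt in Hk. rewrite Hk. ring. }
  specialize (HA mu Hm m ltac:(lia)). unfold mu in HA. rewrite Nat.ltb_irrefl in HA. lra.
Qed.

(* Gram-Schmidt step: every [mu] differs from a vector orthogonal to the rows
   of [A] by a combination of those rows. *)
Lemma kernel_projection l m A : lin_indep m l A -> forall mu : vec, exists nu : vec,
  forall i, (i < m)%nat -> inner l (A i) (fun k => mu k - comb m A nu k) = 0.
Proof.
  revert A. induction m as [|m IH]; intros A HA mu.
  - exists vzero. intros; lia.
  - assert (HA' := lin_indep_S m l A HA).
    (* r: the component of the new row A_m orthogonal to the previous rows *)
    destruct (IH A HA' (A m)) as [nu' Hnu'].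
    set (r := fun k => A m k - comb m A nu' k) in *.
    assert (Hrr : 0 < inner l r r).
    { destruct (Rle_lt_or_eq_dec _ _ (inner_self_nonneg l r)) as [Hp|H0]; [exact Hp|].
      exfalso. apply (lin_indep_last m l A nu' HA). intros j Hj.
      assert (Z := inner_self_zero l r (eq_sym H0) j Hj). unfold r in Z. lra. }
    assert (HAr : inner l (A m) r = inner l r r).
    { unfold r at 2. rewrite inner_minus_l, (inner_comm l (comb m A nu') r), inner_comb.
      rewrite (sumR_ext m _ (fun _ => 0)); [rewrite sumR_const0; ring|].
      intros j Hj. rewrite inner_comm, Hnu' by exact Hj. ring. }
    (* project mu on the first m rows, then remove its component along r *)
    destruct (IH A HA' mu) as [nu1 Hnu1].
    set (mu1 := fun k => mu k - comb m A nu1 k) in *.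
    set (t := inner l (A m) mu1 / inner l (A m) r).
    exists (fun j => if Nat.ltb j m then nu1 j - t * nu' j else t).
    intros i Hi.
    rewrite (inner_ext l (A i) (A i) _ (fun k => mu1 k + (- t) * r k));
      [|intros k _; reflexivity|].
    2:{ intros k _. unfold comb at 1. rewrite sumR_S, Nat.ltb_irrefl.
        unfold mu1, r, comb.
        rewrite (sumR_ext m _ (fun j => nu1 j * A j k - t * (nu' j * A j k))).
        - rewrite sumR_minus, sumR_scal. ring.
        - intros j Hj. apply Nat.ltb_lt in Hj. rewrite Hj. ring. }
    rewrite inner_plus_r, inner_scal_r.
    destruct (Nat.eq_dec i m) as [->|Hne].
    + unfold t. rewrite HAr. field. lra.
    + unfold mu1. rewrite Hnu1 by lia.
      unfold r. rewrite Hnu' by lia. ring.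
Qed.

Definition fsum {T : Type} (g : T -> R) (L : list T) : R := fold_right Rplus 0 (map g L).

Lemma fsum_nonneg {T} (g : T -> R) L : (forall w, In w L -> 0 <= g w) -> 0 <= fsum g L.
Proof.
  induction L as [|a L IH]; intros H; unfold fsum in *; simpl; [lra|].
  assert (0 <= g a) by (apply H; left; auto).
  assert (0 <= fold_right Rplus 0 (map g L)) by (apply IH; intros; apply H; right; auto). lra.
Qed.

Lemma fsum_exp_pos {T} (h : T -> R) L : L <> nil -> 0 < fsum (fun w => exp (h w)) L.
Proof.
  destruct L as [|a L]; intros H; [congruence|]. unfold fsum. simpl.
  assert (0 <= fsum (fun w => exp (h w)) L) by (apply fsum_nonneg; intros; left; apply exp_pos).
  pose proof (exp_pos (h a)). unfold fsum in *. lra.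
Qed.

Lemma fsum_term {T} (g : T -> R) L w :
  (forall w, In w L -> 0 <= g w) -> In w L -> g w <= fsum g L.
Proof.
  induction L as [|a L IH]; intros H Hw; [destruct Hw|]. unfold fsum in *; simpl.
  destruct Hw as [->|Hw].
  - assert (0 <= fold_right Rplus 0 (map g L))
      by (apply (fsum_nonneg g L); intros; apply H; right; auto). lra.
  - assert (g w <= fold_right Rplus 0 (map g L)) by (apply IH; [intros; apply H; right; auto|auto]).
    assert (0 <= g a) by (apply H; left; auto). lra.
Qed.

Lemma fsum_scal {T} (g h : T -> R) c L :
  (forall w, In w L -> g w = c * h w) -> fsum g L = c * fsum h L.
Proof.
  induction L as [|a L IH]; intros H; unfold fsum in *; simpl; [ring|].
  rewrite IH by (intros; apply H; right; auto). rewrite H by (left; auto). ring.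
Qed.

Lemma fsum_le {T} (g h : T -> R) L : (forall w, In w L -> g w <= h w) -> fsum g L <= fsum h L.
Proof.
  induction L as [|a L IH]; intros H; unfold fsum in *; simpl; [lra|].
  assert (g a <= h a) by (apply H; left; auto).
  assert (fold_right Rplus 0 (map g L) <= fold_right Rplus 0 (map h L))
    by (apply IH; intros; apply H; right; auto). lra.
Qed.

Lemma fsum_const1 {T} (L : list T) : fsum (fun _ => 1) L = INR (length L).
Proof.
  induction L as [|a L IH]; unfold fsum in *; simpl; [reflexivity|].
  rewrite IH. destruct (length L); simpl; lra.
Qed.

Lemma Rabs_le_inv x e : Rabs x <= e -> - e <= x <= e.
Proof.
  intros H. pose proof (Rle_abs x). pose proof (Rle_abs (- x)).
  rewrite Rabs_Ropp in *. lra.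
Qed.

Lemma ln_le x y : 0 < x -> x <= y -> ln x <= ln y.
Proof. intros Hx [H|H]; [left; apply ln_increasing; auto|subst; lra]. Qed.

Lemma exp_le a b : a <= b -> exp a <= exp b.
Proof. intros [H|H]; [left; apply exp_increasing; auto|subst; lra]. Qed.

Lemma lse_shift_le {T} (a b : T -> R) L e : L <> nil ->
  (forall w, In w L -> a w <= b w + e) ->
  ln (fsum (fun w => exp (a w)) L) <= e + ln (fsum (fun w => exp (b w)) L).
Proof.
  intros HL H. rewrite <- (ln_exp e), <- ln_mult by (apply exp_pos || apply fsum_exp_pos; auto).
  apply ln_le; [apply fsum_exp_pos; auto|].
  rewrite <- (fsum_scal (fun w => exp e * exp (b w))) by (intros; reflexivity).
  apply fsum_le. intros w Hw. rewrite <- exp_plus. apply exp_le. specialize (H w Hw). lra.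
Qed.

Lemma lse_lipschitz {T} (a b : T -> R) L e : L <> nil ->
  (forall w, In w L -> Rabs (a w - b w) <= e) ->
  Rabs (ln (fsum (fun w => exp (a w)) L) - ln (fsum (fun w => exp (b w)) L)) <= e.
Proof.
  intros HL H. apply Rabs_le. split.
  - assert (ln (fsum (fun w => exp (b w)) L) <= e + ln (fsum (fun w => exp (a w)) L)); [|lra].
    apply lse_shift_le; [exact HL|]. intros w Hw. specialize (H w Hw).
    apply Rabs_le_inv in H. lra.
  - assert (ln (fsum (fun w => exp (a w)) L) <= e + ln (fsum (fun w => exp (b w)) L)); [|lra].
    apply lse_shift_le; [exact HL|]. intros w Hw. specialize (H w Hw).
    apply Rabs_le_inv in H. lra.
Qed.

(* Only the first [l]
   coordinates matter, so the set and the function must respect [veq l]. *)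

(* A ball radius on which a [C]-Lipschitz function varies by less than [e]. *)
Lemma lipschitz_radius C e : 0 < e -> C * (e / (Rabs C + 1)) < e /\ 0 < e / (Rabs C + 1).
Proof.
  intros He. pose proof (Rabs_pos C). pose proof (Rle_abs C).
  assert (Hr : 0 < / (Rabs C + 1)) by (apply Rinv_0_lt_compat; lra).
  assert (Hr1 : (Rabs C + 1) * / (Rabs C + 1) = 1) by (field; lra).
  unfold Rdiv. set (r := / (Rabs C + 1)) in *. split; [|nra].
  assert (C * (e * r) <= Rabs C * (e * r)) by (apply Rmult_le_compat_r; nra).
  nra.
Qed.

From mathcomp Require all_boot all_order all_algebra all_classical all_reals all_analysis.
From mathcomp Require Rstruct Rstruct_topology.

Module EVT.
Import all_boot all_order all_algebra all_classical all_reals all_analysis Rstruct Rstruct_topology.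
Import Order.TTheory GRing.Theory Num.Theory.
Import numFieldNormedType.Exports.
Local Open Scope classical_set_scope.

Definition tov {l : nat} (v : 'rV[R]_l) : vec :=
  fun i => match @insub nat (fun k => (k < l)%N) 'I_l i with Some j => v ord0 j | None => 0%R end.

Definition fromv (l : nat) (x : vec) : 'rV[R]_l := \row_(j < l) x (nat_of_ord j).

Lemma tov_fromv l x : veq l (tov (fromv l x)) x.
Proof. by move=> i /ssrnat.ltP il; rewrite /tov insubT /= mxE. Qed.

Lemma tov_lt l (v : 'rV[R]_l) (j : 'I_l) : tov v j = v ord0 j.
Proof. by rewrite /tov valK. Qed.

Lemma veq_sym l x y : veq l x y -> veq l y x.
Proof. by move=> H i il; rewrite H. Qed.

Lemma lipschitz_max (l : nat) (K : vec -> Prop) (f : vec -> R) (B C : R) (x0 : vec) :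
  Rle 0 B ->
  (forall x y, veq l x y -> K x -> K y) ->
  (forall x y, veq l x y -> f x = f y) ->
  K x0 ->
  (forall x, K x -> forall i, lt i l -> Rle (Rabs (x i)) B) ->
  (forall x, (forall eps, Rlt 0 eps ->
     exists y, K y /\ forall i, lt i l -> Rlt (Rabs (y i - x i)) eps) -> K x) ->
  (forall x y d, Rle 0 d -> (forall i, lt i l -> Rle (Rabs (y i - x i)) d) ->
     Rle (Rabs (f y - f x)) (C * d)) ->
  exists x, K x /\ forall y, K y -> Rle (f y) (f x).
Proof.
move=> B0 HK Hf Kx0 HB HC HL.
pose A := [set v : 'rV[R]_l | K (tov v)].
pose g := fun v : 'rV[R]_l => f (tov v).
have A0 : A !=set0.
  by exists (fromv l x0); apply: (HK x0); [apply: veq_sym; apply: tov_fromv|].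
have cA : compact A.
  apply: bounded_closed_compact.
    exists B; split; first exact: num_real.
    move=> M HM v Av /=.
    have B0' : (0 <= B)%R by apply/RleP.
    change (mx_norm v <= M)%R; rewrite mx_normrE.
    apply: Order.POrderTheory.bigmax_le => [|[i j] _] /=.
      exact: (le_trans B0' (ltW HM)).
    rewrite (ord1 i) -tov_lt -RabsE.
    apply: (le_trans _ (ltW HM)); apply/RleP; apply: HB => //.
    by apply/ssrnat.ltP.
  move=> v clv; apply: HC => eps eps0.
  have e0 : (0 < eps)%R by apply/RltP.
  have [w [Aw bw]] := clv _ (nbhsx_ballx v _ e0).
  exists (tov w); split => // i il.
  have il' : (i < l)%N by apply/ssrnat.ltP.
  have -> : i = nat_of_ord (Ordinal il') by [].
  rewrite !tov_lt RabsE; apply/RltP.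
  case: bw => _ /(_ ord0 (Ordinal il')).
  by rewrite -ball_normE /ball_ /= distrC.
have cg : {within A, continuous g}.
  apply: continuous_subspaceT => v; rewrite /continuous_at.
  apply/(@cvgrPdist_lt _ R^o _ (nbhs v) (nbhs_filter v)) => e e0.
  have e0' : Rlt 0 e by apply/RltP.
  have [Hlt d0] := lipschitz_radius C e e0'.
  apply/nbhs_ballP; exists (e / (Rabs C + 1))%coqR; first by apply/RltP.
  move=> t bt /=.
  rewrite /g -RabsE; apply/RltP.
  rewrite Rabs_minus_sym.
  apply: Rle_lt_trans Hlt.
  apply: HL; first by apply: Rlt_le.
  move=> i il.
  have il' : (i < l)%N by apply/ssrnat.ltP.
  have -> : i = nat_of_ord (Ordinal il') by [].
  rewrite !tov_lt RabsE; apply/RleP/ltW.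
  by case: bt => _ /(_ ord0 (Ordinal il')); rewrite distrC.
have [c cA' cmax] := compact_EVT_max A0 cA cg.
exists (tov c); split; first by move: cA'; rewrite inE.
move=> y Ky.
have Ay : A (fromv l y) by apply: (HK y); [apply: veq_sym; apply: tov_fromv|].
have := cmax (fromv l y); rewrite inE => /(_ Ay).
by rewrite /g (Hf (tov (fromv l y)) y (tov_fromv l y)) => /RleP.
Qed.

End EVT.

Definition lse (l : nat) (pts : list vec) (lam : vec) : R :=
  fsum (fun p => exp (inner l lam p)) pts.

Definition dual (l : nat) (pts : list vec) (theta lam : vec) : R :=
  inner l lam theta - ln (lse l pts lam).

Definition kernel_box (l m : nat) (A : nat -> vec) (B : R) (lam : vec) : Prop :=
  satisfies m l A (fun _ => 0) lam /\ forall i, (i < l)%nat -> Rabs (lam i) <= B.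

Lemma le_0_of_le_eps a C : 0 <= C -> (forall eps, 0 < eps -> a <= C * eps) -> a <= 0.
Proof.
  intros HC H. apply Rnot_lt_le. intros Ha.
  specialize (H (a / (C + 1)) ltac:(apply Rdiv_lt_0_compat; lra)).
  assert (Hmul : a * (C + 1) <= C * a).
  { replace (C * a) with (C * (a / (C + 1)) * (C + 1)) by (field; lra).
    apply Rmult_le_compat_r; lra. }
  nra.
Qed.

Lemma kernel_box_closed l m A B x :
  (forall eps, 0 < eps -> exists y, kernel_box l m A B y /\
     forall i, (i < l)%nat -> Rabs (y i - x i) < eps) ->
  kernel_box l m A B x.
Proof.
  intros Happrox. split.
  - intros j Hj. unfold mat_vec.
    assert (HSj : 0 <= sumR l (fun i => Rabs (A j i)))
      by (apply sumR_nonneg; intros; apply Rabs_pos).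
    assert (Hz : Rabs (inner l (A j) x) <= 0).
    { apply (le_0_of_le_eps _ _ HSj). intros eps He.
      destruct (Happrox eps He) as [y [[Hy _] Hclose]].
      specialize (Hy j Hj). unfold mat_vec in Hy.
      replace (inner l (A j) x) with (inner l (A j) x - inner l (A j) y) by (rewrite Hy; ring).
      apply inner_lipschitz. intros i Hi. rewrite Rabs_minus_sym. left. apply Hclose, Hi. }
    pose proof (Rabs_pos (inner l (A j) x)). apply Rabs_le_inv in Hz. lra.
  - intros i Hi. assert (Hd : Rabs (x i) - B <= 0); [|lra].
    apply (le_0_of_le_eps _ 1 ltac:(lra)). intros eps He.
    destruct (Happrox eps He) as [y [[_ Hy] Hclose]].
    specialize (Hy i Hi). specialize (Hclose i Hi).
    pose proof (Rabs_triang_inv (x i) (y i)). rewrite Rabs_minus_sym in Hclose. lra.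
Qed.

Section Dual.
Variables (l m : nat) (pts : list vec) (A : nat -> vec) (c : vec) (eta : R) (theta : vec).
Hypothesis pts_nonempty : pts <> nil.
Hypothesis vertex_equations :
  forall v, is_vertex l (in_conv_hull l pts) v -> satisfies m l A c v.
Hypothesis rows_indep : lin_indep m l A.
Hypothesis eta_pos : 0 < eta.
Hypothesis theta_in_hull : in_conv_hull l pts theta.
Hypothesis theta_interior : eta_interior m l A c (in_conv_hull l pts) eta theta.

Let L := dual l pts theta.

Lemma lse_pos lam : 0 < lse l pts lam.
Proof. apply fsum_exp_pos, pts_nonempty. Qed.

Lemma pts_in_hull p : In p pts -> in_conv_hull l pts p.
Proof.
  intros Hp. destruct (In_nth pts p vzero Hp) as [k [Hk <-]]. apply pt_in_hull, Hk.
Qed.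

Lemma inner_le_ln_lse lam x : in_conv_hull l pts x -> inner l lam x <= ln (lse l pts lam).
Proof.
  intros Hx.
  assert (HN : (0 < length pts)%nat) by (destruct pts; [congruence|simpl; lia]).
  destruct (argmax_idx _ (fun k => inner l lam (nth k pts vzero)) HN) as [k0 [Hk0 Hmax]].
  apply Rle_trans with (inner l lam (nth k0 pts vzero)).
  - apply (hull_inner_le l pts lam _ x Hx). exact Hmax.
  - rewrite <- (ln_exp (inner l lam (nth k0 pts vzero))).
    apply ln_le; [apply exp_pos|]. unfold lse.
    apply (fsum_term (fun p => exp (inner l lam p))); [intros; left; apply exp_pos|].
    apply nth_In, Hk0.
Qed.

(* Coercivity on the kernel: move from theta by eta in the direction of lam. *)
Lemma dual_coercive lam : satisfies m l A (fun _ => 0) lam -> L lam <= - eta * norm2 l lam.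
Proof.
  intros Hlam. unfold L, dual.
  destruct (Rle_lt_or_eq_dec _ _ (sqrt_pos (inner l lam lam))) as [Hpos|Hzero].
  - fold (norm2 l lam) in Hpos. set (n := norm2 l lam) in *.
    set (theta' := fun i => theta i + (eta / n) * lam i).
    assert (Hsat : satisfies m l A c theta').
    { intros j Hj. unfold mat_vec, theta'. rewrite inner_plus_r, inner_scal_r.
      assert (Ht := hull_satisfies l m pts A c pts_nonempty vertex_equations
                       theta theta_in_hull j Hj).
      assert (Hl := Hlam j Hj). unfold mat_vec in Ht, Hl. rewrite Ht, Hl. ring. }
    assert (Hdist : norm2 l (fun i => theta' i - theta i) <= eta).
    { replace (norm2 l (fun i => theta' i - theta i)) with (norm2 l (fun i => (eta / n) * lam i))
        by (unfold norm2; f_equal; apply inner_ext; intros i _; unfold theta'; ring).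
      rewrite norm2_scal, Rabs_right by (apply Rle_ge, Rlt_le, Rdiv_lt_0_compat; lra).
      fold n. right. field. lra. }
    assert (Hup := inner_le_ln_lse lam theta' (theta_interior theta' Hsat Hdist)).
    unfold theta' in Hup. rewrite inner_plus_r, inner_scal_r, <- (norm2_sq l lam) in Hup.
    fold n in Hup. replace (eta / n * (n * n)) with (eta * n) in Hup by (field; lra).
    lra.
  - fold (norm2 l lam) in Hzero. rewrite <- Hzero.
    assert (Hup := inner_le_ln_lse lam theta theta_in_hull). lra.
Qed.

Lemma dual_zero : L (fun _ => 0) = - ln (INR (length pts)).
Proof.
  unfold L, dual, lse. rewrite inner_zero_l.
  rewrite (fsum_scal _ (fun _ => 1) 1 pts), fsum_const1, Rmult_1_l; [ring|].
  intros p _. rewrite inner_zero_l, exp_0. ring.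
Qed.

(* Adding a combination of the rows of A shifts every <lam, x>, x in the hull,
   by the same constant, so L is unchanged; hence L takes all its values on
   the kernel. *)
Lemma dual_kernel_representative mu :
  exists lam, satisfies m l A (fun _ => 0) lam /\ L lam = L mu.
Proof.
  destruct (kernel_projection l m A rows_indep mu) as [nu Hnu].
  set (lam := fun k => mu k - comb m A nu k).
  exists lam. split; [intros i Hi; apply Hnu, Hi|].
  set (s := sumR m (fun j => nu j * c j)).
  assert (Hshift : forall x, in_conv_hull l pts x -> inner l lam x = inner l mu x - s).
  { intros x Hx. unfold lam. rewrite inner_minus_l, (inner_comm l (comb m A nu)), inner_comb.
    f_equal. apply sumR_ext. intros j Hj.
    assert (H := hull_satisfies l m pts A c pts_nonempty vertex_equations x Hx j Hj).
    unfold mat_vec in H. rewrite inner_comm, H. reflexivity. }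
  assert (Hlse : lse l pts lam = exp (- s) * lse l pts mu).
  { unfold lse. apply fsum_scal. intros p Hp. rewrite (Hshift p (pts_in_hull p Hp)).
    rewrite <- exp_plus. f_equal. ring. }
  unfold L, dual. rewrite (Hshift theta theta_in_hull), Hlse.
  rewrite ln_mult, ln_exp by (apply exp_pos || apply lse_pos). ring.
Qed.

Lemma dual_lipschitz : exists C, forall x y d, 0 <= d ->
  (forall i, (i < l)%nat -> Rabs (y i - x i) <= d) -> Rabs (L y - L x) <= C * d.
Proof.
  set (Ct := sumR l (fun i => Rabs (theta i))).
  set (Cp := fsum (fun p => sumR l (fun i => Rabs (p i))) pts).
  exists (Ct + Cp). intros x y d Hd H. unfold L, dual.
  assert (H1 : Rabs (inner l y theta - inner l x theta) <= Ct * d).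
  { rewrite (inner_comm l y), (inner_comm l x). apply inner_lipschitz, H. }
  assert (H2 : Rabs (ln (lse l pts y) - ln (lse l pts x)) <= Cp * d).
  { apply lse_lipschitz; [exact pts_nonempty|]. intros p Hp.
    apply Rle_trans with (sumR l (fun i => Rabs (p i)) * d).
    - rewrite (inner_comm l y), (inner_comm l x). apply inner_lipschitz, H.
    - apply Rmult_le_compat_r; [exact Hd|]. unfold Cp.
      apply (fsum_term (fun p => sumR l (fun i => Rabs (p i)))); [|exact Hp].
      intros; apply sumR_nonneg; intros; apply Rabs_pos. }
  apply Rabs_le_inv in H1. apply Rabs_le_inv in H2. apply Rabs_le. lra.
Qed.

Lemma dual_veq x y : veq l x y -> L x = L y.
Proof.
  intros Hxy. unfold L, dual, lse.
  rewrite (inner_ext l x y theta theta Hxy (fun i _ => eq_refl)).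
  unfold fsum. do 3 f_equal. apply map_ext. intros p.
  rewrite (inner_ext l x y p p Hxy (fun i _ => eq_refl)). reflexivity.
Qed.

Lemma kernel_box_veq B x y : veq l x y -> kernel_box l m A B x -> kernel_box l m A B y.
Proof.
  intros Hxy [Hx1 Hx2]. split.
  - intros j Hj. rewrite <- (Hx1 j Hj). unfold mat_vec.
    apply inner_ext; [intros i _; reflexivity|intros i Hi; symmetry; apply Hxy, Hi].
  - intros i Hi. rewrite <- (Hxy i Hi). apply Hx2, Hi.
Qed.

Let radius := ln (INR (length pts)) / eta.

Lemma radius_nonneg : 0 <= radius.
Proof.
  unfold radius, Rdiv. apply Rmult_le_pos; [|left; apply Rinv_0_lt_compat, eta_pos].
  rewrite <- ln_1.
  apply ln_le; [lra|]. destruct pts as [|p ps]; [congruence|].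
  simpl length. rewrite S_INR. pose proof (pos_INR (length ps)). lra.
Qed.

Lemma norm_bound lam : satisfies m l A (fun _ => 0) lam ->
  L (fun _ => 0) <= L lam -> norm2 l lam <= radius.
Proof.
  intros Hlam Hge. assert (Hc := dual_coercive lam Hlam). rewrite dual_zero in Hge.
  unfold radius. apply Rmult_le_reg_l with eta; [exact eta_pos|].
  replace (eta * (ln (INR (length pts)) / eta)) with (ln (INR (length pts))) by (field; lra).
  lra.
Qed.

(* Existence of a maximiser in the kernel: maximise over the compact
   [kernel_box] and use coercivity outside it. *)
Lemma dual_maximizer_exists :
  exists lam, satisfies m l A (fun _ => 0) lam /\ forall mu, L mu <= L lam.
Proof.
  destruct dual_lipschitz as [C HC].
  assert (K0 : kernel_box l m A radius (fun _ => 0)).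
  { split; [intros j Hj; apply inner_zero_r|intros i Hi; rewrite Rabs_R0; apply radius_nonneg]. }
  destruct (EVT.lipschitz_max l (kernel_box l m A radius) L radius C (fun _ => 0)
              radius_nonneg (kernel_box_veq radius) dual_veq K0
              (fun x Hx => proj2 Hx) (kernel_box_closed l m A radius) HC)
    as [lam [[Hlam Hbox] Hmax]].
  exists lam. split; [exact Hlam|]. intros mu.
  destruct (dual_kernel_representative mu) as [lam' [Hlam' <-]].
  destruct (Rle_dec (L lam') (L (fun _ => 0))) as [Hle|Hgt].
  - apply Rle_trans with (L (fun _ => 0)); [exact Hle|apply Hmax, K0].
  - apply Hmax. split; [exact Hlam'|]. intros i Hi.
    apply Rle_trans with (norm2 l lam'); [apply coord_le_norm2, Hi|].
    apply norm_bound; [exact Hlam'|lra].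
Qed.

End Dual.

Lemma Ldual_dual Delta Phi Omega theta lam :
  Ldual Delta Phi Omega theta lam
  = dual (length Phi) (map (QPhi Delta Phi) Omega) theta lam.
Proof. unfold Ldual, dual, lse, fsum. rewrite map_map. reflexivity. Qed.

Theorem theorem4
  (Delta : list nat) (Phi : list formula) (Omega : list world)
  (m : nat) (A : nat -> vec) (c : vec) (eta : R) (theta : vec) :
  NoDup Delta ->
  NoDup Omega ->
  Omega <> nil ->
  (forall w, In w Omega -> world_over Delta w) ->
  max_indep_system m (length Phi) A c (RMP Delta Phi Omega) ->
  0 < eta ->
  RMP Delta Phi Omega theta ->
  eta_interior m (length Phi) A c (RMP Delta Phi Omega) eta theta ->
  (exists lam : vec,
      is_maximizer Delta Phi Omega theta lam /\
      satisfies m (length Phi) A (fun _ => 0) lam) /\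
  (forall lam : vec,
      is_maximizer Delta Phi Omega theta lam ->
      satisfies m (length Phi) A (fun _ => 0) lam ->
      norm2 (length Phi) lam <= ln (INR (length Omega)) / eta).
Proof.
  intros _ _ HOmega _ [Hvert [Hindep _]] Heta Htheta Hinterior.
  unfold RMP, is_maximizer in *.
  assert (Hpts : map (QPhi Delta Phi) Omega <> nil) by (destruct Omega; simpl; congruence).
  split.
  - destruct (dual_maximizer_exists _ _ _ A c eta theta Hpts Hvert Hindep Heta Htheta Hinterior)
      as [lam [Hkernel Hmax]].
    exists lam. split; [|exact Hkernel].
    intros mu. rewrite !Ldual_dual. apply Hmax.
  - intros lam Hmax Hkernel.
    rewrite <- (length_map (QPhi Delta Phi) Omega).
    apply (norm_bound _ _ _ A c eta theta Hpts Hvert Heta Htheta Hinterior lam Hkernel).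
    rewrite <- !Ldual_dual. apply Hmax.
Qed.
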